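(* In the $n$-fold replicate economy: (i) if all firms have increasing returns to diversification, then $W$ at the fully connected structure is at least $W$ at the islands structure; (ii) if all firms have decreasing returns to diversification, then $W$ at the islands structure is at least $W$ at the fully connected structure.
   Context: Sectors $0$ (labor) and $1,\dots,L$; base shares $a_{0,\ell}>0$, $\sum a_{0,\ell}=1$; requirements $b_{\ell,\ell'}\ge0$, $b_{\ell,0}>0$, $\sum_{\ell'=0}^Lb_{\ell,\ell'}\le1$. $n$-fold replicate: firms $M=\{1,\dots,nL\}$, $M_\ell=\{(\ell-1)n+1,\dots,\ell n\}$ (firm $(\ell-1)n+c$ in country $c$), household share $a_{0,i}=a_{0,\ell}/n$ for $i\in M_\ell$. For a partition $\mathcal{Q}=\{Q_1,\dots,Q_K\}$ of $\{1,\dots,n\}$, $Q_{\ell,k}=\{(\ell-1)n+c:c\in Q_k\}$ and $a^{\mathcal{Q}}$: for $i\in Q_{\ell,k}$, $a_{i,0}=b_{\ell,0}$, $a_{i,i}=b_{\ell,\ell}$, $a_{i,j}=0$ for $j\in Q_{\ell,k}\setminus\{i\}$, $a_{i,j}=b_{\ell,\ell'}/|Q_k|$ for $j\in Q_{\ell',k}$, $\ell'\notin\{0,\ell\}$, $0$ otherwise. Islands structure: $\mathcal{Q}=\{\{1\},\dots,\{n\}\}$; fully connected: $\mathcal{Q}=\{\{1,\dots,n\}\}$. Welfare $W(A,\lambda)=a_0^T(I-A)^{-1}u$, $A=(a_{i,j})_{i,j\in M}$, $u_i=\log\lambda_i(a_i)+\sum_{j\in M\cup\{0\}}a_{i,j}\log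 a_{i,j}$. Hicks-neutral productivity $\bar\lambda(a_i)=1/\prod_{j\in M}a_{i,j}^{a_{i,j}}$. Firm $i$ (with productivity function $\lambda_i>0$ on $\mathbb{R}^M_+$) has increasing (resp. decreasing) returns to diversification if for all $a_i,a'_i$: $\bar\lambda(a_i)\ge\bar\lambda(a'_i)\Rightarrow \lambda_i(a_i)/\lambda_i(a'_i)\ge\bar\lambda(a_i)/\bar\lambda(a'_i)$ (resp. $\le$). *)

From HB Require Import structures.
From mathcomp Require Import all_boot all_order all_algebra.
From mathcomp Require Import all_classical all_reals all_analysis.
Set Implicit Arguments. Unset Strict Implicit. Unset Printing Implicit Defensive.
Import Order.TTheory GRing.Theory Num.Theory.
Local Open Scope ring_scope.

(* Firms of the n-fold replicate: M = 'I_(L*n) (0-based), firm i = l*n + c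
   is in sector l = i %/ n and country c = i %% n. *)
Lemma sector_lt (L n : nat) (i : 'I_(L * n)) : (i %/ n < L)%N.
Proof.
case: n i => [|n] i; first by case: i => k; rewrite muln0.
by rewrite ltn_divLR // ltn_ord.
Qed.

Lemma country_lt (L n : nat) (i : 'I_(L * n)) : (i %% n < n)%N.
Proof.
case: n i => [|n] i; first by case: i => k; rewrite muln0.
by rewrite ltn_mod.
Qed.

Definition sector (L n : nat) (i : 'I_(L * n)) : 'I_L := Ordinal (sector_lt i).
Definition country (L n : nat) (i : 'I_(L * n)) : 'I_n := Ordinal (country_lt i).

Section Econ.
Variable R : realType.

(* Hicks-neutral productivity lambda-bar(a_i) = 1 / prod_j a_ij^a_ij (0^0 = 1). *)
Definition hicks (m : nat) (a : 'rV[R]_m) : R :=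
  1 / \prod_(j < m) (a 0 j `^ a 0 j).

Definition nonneg_row (m : nat) (a : 'rV[R]_m) : Prop := forall j, 0 <= a 0 j.

Definition incr_returns (m : nat) (lam : 'rV[R]_m -> R) : Prop :=
  forall a a' : 'rV[R]_m, nonneg_row a -> nonneg_row a' ->
    hicks a' <= hicks a -> hicks a / hicks a' <= lam a / lam a'.

Definition decr_returns (m : nat) (lam : 'rV[R]_m -> R) : Prop :=
  forall a a' : 'rV[R]_m, nonneg_row a -> nonneg_row a' ->
    hicks a' <= hicks a -> lam a / lam a' <= hicks a / hicks a'.

(* Welfare W(A, lambda) = a0^T (I - A)^{-1} u, with
   u_i = log lambda_i(a_i) + sum_{j in M u {0}} a_ij log a_ij.
   Labor shares a_{i,0} are given by alab; (ln 0 = 0, so 0 log 0 = 0). *)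
Definition uvec (m : nat) (alab : 'I_m -> R) (A : 'M[R]_m)
    (lam : 'I_m -> 'rV[R]_m -> R) : 'cV[R]_m :=
  \col_i (ln (lam i (row i A)) + alab i * ln (alab i)
          + \sum_(j < m) A i j * ln (A i j)).

Definition welfare (m : nat) (a0 : 'rV[R]_m) (alab : 'I_m -> R) (A : 'M[R]_m)
    (lam : 'I_m -> 'rV[R]_m -> R) : R :=
  (a0 *m invmx (1%:M - A) *m uvec alab A lam) 0 0.

Variables (L n : nat).

Definition hh_shares (a0s : 'I_L -> R) : 'rV[R]_(L * n) :=
  \row_i (a0s (sector i) / n%:R).

Definition labor_shares (b0 : 'I_L -> R) : 'I_(L * n) -> R :=
  fun i => b0 (sector i).

Definition netQ (Q : {set {set 'I_n}}) (b : 'I_L -> 'I_L -> R) : 'M[R]_(L * n) :=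
  \matrix_(i < L * n, j < L * n)
    if sector i == sector j then (if i == j then b (sector i) (sector i) else 0)
    else if country j \in finset.pblock Q (country i)
         then b (sector i) (sector j) / #|finset.pblock Q (country i)|%:R
         else 0.

Definition islands : {set {set 'I_n}} := [set [set c] | c : 'I_n].
Definition fully_connected : {set {set 'I_n}} := [set [set: 'I_n]].

End Econ.

From HB Require Import structures.
From mathcomp Require Import all_boot all_order all_algebra.
From mathcomp Require Import all_classical all_reals all_analysis.
From mathcomp Require Import zify ring lra.
Import Order.TTheory GRing.Theory Num.Theory.
Set Implicit Arguments. Unset Strict Implicit.
Local Open Scope ring_scope.

(* Both networks are obtained from the sectoral matrix b by mixing countries
   through a doubly stochastic kernel (the identity for islands, the uniform
   kernel for full connection).  Hence the Domar weights
   a_0^T (I - A)^{-1} are the same nonnegative vector in both economies, and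
   welfare differs by a nonnegative combination of the firm-level differences
   of u_i = log lambda_i + sum_j a_ij log a_ij.  Full connection splits every
   input share over n suppliers, lowering sum_j a_ij log a_ij, i.e. raising
   the Hicks-neutral productivity 1 / prod_j a_ij^a_ij.  With increasing
   returns lambda_i rises at least by that factor, so u_i increases; with
   decreasing returns it rises by at most that factor, so u_i decreases. *)

Section Firms.
Variables L n : nat.

Lemma firm_lt (l : 'I_L) (c : 'I_n) : (l * n + c < L * n)%N.
Proof. have := ltn_ord c; have := ltn_ord l; nia. Qed.

Definition firm (l : 'I_L) (c : 'I_n) : 'I_(L * n) := Ordinal (firm_lt l c).

Lemma sector_firm l c : sector (firm l c) = l.
Proof.
apply: val_inj => /=; have n_gt0 : (0 < n)%N by case: c => c /=; case: n.
by rewrite divnMDl // divn_small ?addn0.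
Qed.

Lemma country_firm l c : country (firm l c) = c.
Proof. by apply: val_inj => /=; rewrite modnMDl modn_small. Qed.

Lemma firmK i : firm (sector i) (country i) = i.
Proof. by apply: val_inj => /=; rewrite -divn_eq. Qed.

Lemma eq_firm l c l' c' : (firm l c == firm l' c') = (l == l') && (c == c').
Proof.
apply/eqP/andP => [E | [/eqP-> /eqP->] //].
move: (congr1 (@sector L n) E) (congr1 (@country L n) E).
by rewrite !sector_firm !country_firm => -> ->.
Qed.

Lemma big_firm (V : nmodType) (F : 'I_(L * n) -> V) :
  \sum_i F i = \sum_(l < L) \sum_(c < n) F (firm l c).
Proof.
rewrite pair_big /= (reindex (fun p : 'I_L * 'I_n => firm p.1 p.2)) //.
exists (fun i => (sector i, country i)) => [[l c] _ | i _] /=.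
  by rewrite sector_firm country_firm.
by rewrite firmK.
Qed.

End Firms.

Section Substochastic.
Variables (R : realFieldType) (m : nat) (A : 'M[R]_m).
Hypotheses (A_ge0 : forall i j, 0 <= A i j) (A_rowsum_lt1 : forall i, \sum_j A i j < 1).

(* A kernel vector of (I - A)^T would have a coordinate of maximal modulus
   that is a strict contraction of itself. *)
Lemma substochastic_unitmx : (1%:M - A) \in unitmx.
Proof.
rewrite unitmxE unitfE -det_tr; apply/negP => /det0P [v v_neq0 vA].
have v_fix k : v 0 k = \sum_j A k j * v 0 j.
  move/matrixP: vA => /(_ 0 k); rewrite !mxE => /eqP.
  rewrite (bigD1 k) //= !mxE eqxx mulr1n.
  rewrite (eq_bigr (fun j => - (A k j * v 0 j))); last first.
    by move=> j /negbTE jk; rewrite !mxE eq_sym jk mulr0n sub0r mulrN mulrC.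
  rewrite sumrN => /eqP v_eq; rewrite [RHS](bigD1 k) //=.
  move: v_eq; set S := \sum_(i < m | i != k) _; lra.
have [j0 vj0 | v0] := pickP (fun j => v 0 j != 0); last first.
  by case/negP: v_neq0; apply/eqP/rowP => j; rewrite mxE; apply/eqP/negbFE.
have [k _ k_max] := @arg_maxP _ _ _ j0 xpredT (fun k => `|v 0 k|) isT.
have vk_gt0 : 0 < `|v 0 k| by apply: lt_le_trans (k_max j0 isT); rewrite normr_gt0.
have : `|v 0 k| <= (\sum_j A k j) * `|v 0 k|.
  rewrite {1}v_fix mulr_suml; apply: le_trans (ler_norm_sum _ _ _) _.
  apply: ler_sum => j _; rewrite normrM ger0_norm //.
  by apply: ler_wpM2l => //; apply: k_max.
have := A_rowsum_lt1 k; set r := \sum_j _; nra.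
Qed.

(* Column j of the inverse X satisfies X = e_j + A X; at its minimal
   coordinate this forces the minimum to be nonnegative. *)
Lemma substochastic_invmx_ge0 i j : 0 <= invmx (1%:M - A) i j.
Proof.
set X := invmx _.
have X_fix k : X k j = (k == j)%:R + \sum_l A k l * X l j.
  move/matrixP: (mulmxV substochastic_unitmx) => /(_ k j); rewrite !mxE => <-.
  rewrite (eq_bigr (fun l => (k == l)%:R * X l j - A k l * X l j)); last first.
    by move=> l _; rewrite !mxE mulrBl.
  rewrite sumrB (bigD1 k) //= eqxx mul1r big1 ?addr0 ?subrK // => l /negbTE.
  by rewrite eq_sym => ->; rewrite mul0r.
have [k _ k_min] := @arg_minP _ _ _ j xpredT (fun k => X k j) isT.
apply: le_trans (k_min i isT).
have : (\sum_l A k l) * X k j <= X k j.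
  rewrite {2}X_fix mulr_suml.
  have : \sum_l A k l * X k j <= \sum_l A k l * X l j.
    by apply: ler_sum => l _; apply: ler_wpM2l => //; apply: k_min.
  have : 0 <= (k == j)%:R :> R by rewrite ler0n.
  lra.
have := A_rowsum_lt1 k; set r := \sum_l _; nra.
Qed.

End Substochastic.

Section MixedNetwork.
Variables (R : realType) (L n : nat) (b : 'I_L -> 'I_L -> R).

Definition doubly_stochastic (w : 'I_n -> 'I_n -> R) : Prop :=
  [/\ forall c c', 0 <= w c c', forall c, \sum_c' w c c' = 1
    & forall c', \sum_c w c c' = 1].

Definition mixed_net (w : 'I_n -> 'I_n -> R) : 'M[R]_(L * n) :=
  \matrix_(i, j) if sector i == sector j then
                   (if i == j then b (sector i) (sector i) else 0)
                 else w (country i) (country j) * b (sector i) (sector j).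

Definition mix_islands (c c' : 'I_n) : R := (c' == c)%:R.
Definition mix_full (c c' : 'I_n) : R := 1 / n%:R.

Lemma doubly_stochastic_islands : doubly_stochastic mix_islands.
Proof.
split=> [c c' | c | c']; rewrite /mix_islands ?ler0n //.
  by rewrite (bigD1 c) //= eqxx big1 ?addr0 // => c' /negbTE ->.
by rewrite (bigD1 c') //= eqxx big1 ?addr0 // => c /negbTE; rewrite eq_sym => ->.
Qed.

Lemma doubly_stochastic_full : (0 < n)%N -> doubly_stochastic mix_full.
Proof.
move=> n_gt0; have sum_full : \sum_(c < n) (1 / n%:R : R) = 1.
  by rewrite sumr_const card_ord -mulr_natr; field; rewrite pnatr_eq0 -lt0n.
by split=> [c c' | c | c']; rewrite /mix_full.
Qed.

Lemma mixed_netE w l c l' c' : mixed_net w (firm l c) (firm l' c') =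
  if l == l' then (if c == c' then b l l else 0) else w c c' * b l l'.
Proof.
by rewrite mxE !sector_firm !country_firm eq_firm; case: eqP => [->|].
Qed.

Lemma mixed_net_ge0 w : (forall l l', 0 <= b l l') -> doubly_stochastic w ->
  forall i j, 0 <= mixed_net w i j.
Proof.
move=> b_ge0 [w_ge0 _ _] i j; rewrite -[i]firmK -[j]firmK mixed_netE.
by case: ifP => _; [case: ifP | apply: mulr_ge0].
Qed.

Lemma nonneg_row_mixed_net w i : (forall l l', 0 <= b l l') -> doubly_stochastic w ->
  nonneg_row (row i (mixed_net w)).
Proof. by move=> b_ge0 w_ds j; rewrite mxE mixed_net_ge0. Qed.

Lemma mixed_net_rowsum w l c : doubly_stochastic w ->
  \sum_j mixed_net w (firm l c) j = \sum_l' b l l'.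
Proof.
move=> [_ w_row _]; rewrite big_firm; apply: eq_bigr => l' _.
under eq_bigr do rewrite mixed_netE.
case: eqP => [<- | _]; last by rewrite -mulr_suml w_row mul1r.
by rewrite (bigD1 c) //= eqxx big1 ?addr0 // => c' /negbTE; rewrite eq_sym => ->.
Qed.

Lemma mixed_net_colsum w (D : 'I_L -> R) l' c' : doubly_stochastic w ->
  \sum_i D (sector i) * mixed_net w i (firm l' c') = \sum_l D l * b l l'.
Proof.
move=> [_ _ w_col]; rewrite big_firm; apply: eq_bigr => l _.
under eq_bigr do rewrite mixed_netE sector_firm.
case: eqP => [-> | _].
  by rewrite (bigD1 c') //= eqxx big1 ?addr0 // => c /negbTE ->; rewrite mulr0.
by under eq_bigr do rewrite mulrCA; rewrite -mulr_suml w_col mul1r.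
Qed.

Lemma pblock_islands (c : 'I_n) : finset.pblock (islands n) c = [set c].
Proof.
rewrite /finset.pblock; case: pickP => [B /andP[/finset.imsetP[c' _ ->]] | no_block] /=.
  by rewrite finset.in_set1 => /eqP->.
by move: (no_block (finset.set1 c)) => /=; rewrite finset.set11 andbT finset.imset_f.
Qed.

Lemma pblock_fully_connected (c : 'I_n) : finset.pblock (fully_connected n) c = [set: 'I_n].
Proof.
rewrite /finset.pblock; case: pickP => [B /andP[] | no_block] /=.
  by rewrite finset.in_set1 => /eqP.
by move: (no_block finset.setT) => /=; rewrite finset.in_setT andbT finset.in_set1 eqxx.
Qed.

Lemma netQ_islands : netQ (islands n) b = mixed_net mix_islands.
Proof.
apply/matrixP => i j; rewrite !mxE; case: eqP => // _.
rewrite pblock_islands finset.in_set1 finset.cards1 divr1 /mix_islands.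
by case: eqP; rewrite ?mul1r ?mul0r.
Qed.

Lemma netQ_fully_connected : netQ (fully_connected n) b = mixed_net mix_full.
Proof.
apply/matrixP => i j; rewrite !mxE; case: eqP => // _.
by rewrite pblock_fully_connected finset.in_setT finset.cardsT card_ord /mix_full mulrC div1r.
Qed.

End MixedNetwork.

Section Entropy.
Variable R : realType.

Definition xlnx_sum (m : nat) (a : 'rV[R]_m) : R := \sum_j a 0 j * ln (a 0 j).

Lemma hicks_xlnx_sum m (a : 'rV[R]_m) : nonneg_row a -> hicks a = expR (- xlnx_sum a).
Proof.
move=> a_ge0; rewrite /hicks expRN expR_sum div1r; congr (_^-1).
apply: eq_bigr => j _; rewrite /powR; case: eqP => [->|_]; first by rewrite mul0r expR0.
by rewrite mulrC.
Qed.

(* Splitting a share x equally among k suppliers lowers x log x by x log k. *)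
Lemma sum_xlnx_split_le (x : R) (k : nat) : 0 <= x -> (0 < k)%N ->
  \sum_(c < k) x / k%:R * ln (x / k%:R) <= x * ln x.
Proof.
move=> x_ge0 k_gt0; rewrite sumr_const card_ord -[X in X <= _]mulr_natr.
have [<-|x_neq0] := eqVneq 0 x; first by rewrite !mul0r.
have x_gt0 : 0 < x by rewrite lt_neqAle x_neq0.
have k_pos : 0 < k%:R :> R by rewrite ltr0n.
have lnk_ge0 : 0 <= ln (k%:R : R) by apply: ln_ge0; rewrite ler1n.
rewrite ln_div ?posrE //.
have -> : x / k%:R * (ln x - ln k%:R) * k%:R = x * (ln x - ln k%:R).
  by field; rewrite gt_eqF.
nra.
Qed.

Lemma incr_returns_xlnx_sum m (lam : 'rV[R]_m -> R) (a a' : 'rV[R]_m) :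
  incr_returns lam -> nonneg_row a -> nonneg_row a' -> 0 < lam a -> 0 < lam a' ->
  xlnx_sum a <= xlnx_sum a' -> ln (lam a') + xlnx_sum a' <= ln (lam a) + xlnx_sum a.
Proof.
move=> incr a_ge0 a'_ge0 lam_gt0 lam'_gt0 le_aa'.
have := incr a a' a_ge0 a'_ge0.
rewrite !hicks_xlnx_sum // ler_expR lerN2 => /(_ le_aa').
rewrite -ler_ln ?posrE ?divr_gt0 ?expR_gt0 // !ln_div ?posrE ?expR_gt0 // !expRK.
lra.
Qed.

Lemma decr_returns_xlnx_sum m (lam : 'rV[R]_m -> R) (a a' : 'rV[R]_m) :
  decr_returns lam -> nonneg_row a -> nonneg_row a' -> 0 < lam a -> 0 < lam a' ->
  xlnx_sum a <= xlnx_sum a' -> ln (lam a) + xlnx_sum a <= ln (lam a') + xlnx_sum a'.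
Proof.
move=> decr a_ge0 a'_ge0 lam_gt0 lam'_gt0 le_aa'.
have := decr a a' a_ge0 a'_ge0.
rewrite !hicks_xlnx_sum // ler_expR lerN2 => /(_ le_aa').
rewrite -ler_ln ?posrE ?divr_gt0 ?expR_gt0 // !ln_div ?posrE ?expR_gt0 // !expRK.
lra.
Qed.

Lemma xlnx_sum_full_le_islands L n (b : 'I_L -> 'I_L -> R) i :
  (0 < n)%N -> (forall l l', 0 <= b l l') ->
  xlnx_sum (row i (mixed_net b (@mix_full R n)))
  <= xlnx_sum (row i (mixed_net b (@mix_islands R n))).
Proof.
move=> n_gt0 b_ge0; rewrite /xlnx_sum -[i]firmK !big_firm; apply: ler_sum => l' _.
under eq_bigr do rewrite mxE mixed_netE.
under [X in _ <= X]eq_bigr do rewrite mxE mixed_netE.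
case: eqP => _ //; rewrite /mix_full /mix_islands.
rewrite [X in _ <= X](bigD1 (country i)) //= eqxx mulr1n !mul1r.
rewrite [in X in _ <= X]big1 ?addr0; last by move=> c /negbTE ->; rewrite !mul0r.
under eq_bigr do rewrite [_^-1 * _]mulrC.
exact: sum_xlnx_split_le.
Qed.

End Entropy.

Section DomarWeights.
Variables (R : realType) (L n : nat) (a0s : 'I_L -> R) (b : 'I_L -> 'I_L -> R) (b0 : 'I_L -> R).
Hypotheses (a0s_gt0 : forall l, 0 < a0s l) (b_ge0 : forall l l', 0 <= b l l')
  (b0_gt0 : forall l, 0 < b0 l) (b_rowsum : forall l, b0 l + \sum_l' b l l' <= 1).

Definition sector_net : 'M[R]_L := \matrix_(l, l') b l l'.

Definition sector_weights : 'rV[R]_L := (\row_l a0s l) *m invmx (1%:M - sector_net).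

Lemma sector_net_rowsum_lt1 l : \sum_l' sector_net l l' < 1.
Proof. under eq_bigr do rewrite mxE; have := b_rowsum l; have := b0_gt0 l; lra. Qed.

Lemma sector_weights_ge0 l : 0 <= sector_weights 0 l.
Proof.
rewrite mxE; apply: sumr_ge0 => k _; apply: mulr_ge0; first by rewrite mxE ltW.
by apply: substochastic_invmx_ge0 => [i j|]; rewrite ?mxE //; apply: sector_net_rowsum_lt1.
Qed.

Lemma sector_weights_fix l :
  sector_weights 0 l - \sum_l' sector_weights 0 l' * b l' l = a0s l.
Proof.
have unit_B : (1%:M - sector_net) \in unitmx.
  by apply: substochastic_unitmx => [i j|]; rewrite ?mxE //; apply: sector_net_rowsum_lt1.
move/rowP: (mulmxKV unit_B (\row_l a0s l)) => /(_ l).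
rewrite -/sector_weights mulmxBr mulmx1 !mxE => <-; congr (_ - _).
by apply: eq_bigr => k _; rewrite [sector_net _ _]mxE.
Qed.

Lemma domar_weights_mixed_net w (D : 'rV[R]_L) : doubly_stochastic w ->
  (forall l, D 0 l - \sum_l' D 0 l' * b l' l = a0s l) ->
  hh_shares n a0s *m invmx (1%:M - mixed_net b w) = \row_i (D 0 (sector i) / n%:R).
Proof.
move=> w_ds D_fix; have unit_N : (1%:M - mixed_net b w) \in unitmx.
  apply: substochastic_unitmx => [i j|i]; first exact: mixed_net_ge0.
  rewrite -[i]firmK mixed_net_rowsum //.
  by have := b_rowsum (sector i); have := b0_gt0 (sector i); lra.
apply: (canLR (mulmxK unit_N)); apply/rowP => j; rewrite -[j]firmK.
rewrite mulmxBr mulmx1 !mxE sector_firm -D_fix mulrBl mulr_suml; congr (_ - _).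
under [RHS]eq_bigr do rewrite mxE.
have /= -> := mixed_net_colsum b (fun l => D 0 l / n%:R) (sector j) (country j) w_ds.
by apply: eq_bigr => l _; rewrite mulrAC.
Qed.

End DomarWeights.

Section Welfare.
Variable R : realType.

Lemma uvecE m (alab : 'I_m -> R) (A : 'M[R]_m) lam i :
  uvec alab A lam i 0 = ln (lam i (row i A)) + alab i * ln (alab i) + xlnx_sum (row i A).
Proof. by rewrite mxE; congr (_ + _); apply: eq_bigr => j _; rewrite mxE. Qed.

Lemma welfare_le m (a0 : 'rV[R]_m) alab (A A' : 'M[R]_m) lam :
  a0 *m invmx (1%:M - A) = a0 *m invmx (1%:M - A') ->
  (forall i, 0 <= (a0 *m invmx (1%:M - A)) 0 i) ->
  (forall i, uvec alab A lam i 0 <= uvec alab A' lam i 0) ->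
  welfare a0 alab A lam <= welfare a0 alab A' lam.
Proof.
move=> same_weights weights_ge0 le_u; rewrite /welfare -same_weights.
move: (a0 *m _) weights_ge0 => d d_ge0; rewrite !mxE.
by apply: ler_sum => i _; apply: ler_wpM2l.
Qed.

End Welfare.

Theorem mainTheorem13 (R : realType) (L n : nat)
  (a0s : 'I_L -> R) (b : 'I_L -> 'I_L -> R) (b0 : 'I_L -> R)
  (lam : 'I_(L * n) -> 'rV[R]_(L * n) -> R) :
  (forall l, 0 < a0s l) -> \sum_l a0s l = 1 ->
  (forall l l', 0 <= b l l') -> (forall l, 0 < b0 l) ->
  (forall l, b0 l + \sum_l' b l l' <= 1) ->
  (forall i (a : 'rV[R]_(L * n)), nonneg_row a -> 0 < lam i a) ->
  ((forall i, incr_returns (lam i)) ->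
     welfare ((@hh_shares R L n a0s)) ((@labor_shares R L n b0))
             ((@netQ R L n (islands n) b)) lam
     <= welfare ((@hh_shares R L n a0s)) ((@labor_shares R L n b0))
             ((@netQ R L n (fully_connected n) b)) lam)
  /\
  ((forall i, decr_returns (lam i)) ->
     welfare ((@hh_shares R L n a0s)) ((@labor_shares R L n b0))
             ((@netQ R L n (fully_connected n) b)) lam
     <= welfare ((@hh_shares R L n a0s)) ((@labor_shares R L n b0))
             ((@netQ R L n (islands n) b)) lam).
Proof.
move=> a0s_gt0 _ b_ge0 b0_gt0 b_rowsum lam_gt0.
have [n0 | n_gt0] := posnP n.
  subst n; rewrite /welfare !mxE !big1 // => -[i i_lt] _.
  by exfalso; move: i_lt; rewrite muln0.
rewrite netQ_islands netQ_fully_connected.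
have isl := doubly_stochastic_islands R n; have full := doubly_stochastic_full R n_gt0.
have weightsE (w : 'I_n -> 'I_n -> R) (w_ds : doubly_stochastic w) :=
  domar_weights_mixed_net b_ge0 b0_gt0 b_rowsum w_ds
    (sector_weights_fix a0s b_ge0 b0_gt0 b_rowsum).
have weights_ge0 (i : 'I_(L * n)) :
    0 <= (\row_i (sector_weights a0s b 0 (sector i) / n%:R)) 0 i.
  by rewrite mxE divr_ge0 ?ler0n // (sector_weights_ge0 a0s_gt0 b_ge0 b0_gt0 b_rowsum).
have nn_isl i := nonneg_row_mixed_net i b_ge0 isl.
have nn_full i := nonneg_row_mixed_net i b_ge0 full.
have xlnx_le i := xlnx_sum_full_le_islands i n_gt0 b_ge0.
split=> returns; apply: welfare_le; rewrite ?weightsE // => i; rewrite !uvecE.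
- have := incr_returns_xlnx_sum (returns i) (nn_full i) (nn_isl i)
    (lam_gt0 _ _ (nn_full i)) (lam_gt0 _ _ (nn_isl i)) (xlnx_le i).
  lra.
- have := decr_returns_xlnx_sum (returns i) (nn_full i) (nn_isl i)
    (lam_gt0 _ _ (nn_full i)) (lam_gt0 _ _ (nn_isl i)) (xlnx_le i).
  lra.
Qed.
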